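(* If $H$ is a triangle-free simple graph and $k \geq 1$, then $\tau(I_k \vee H) \leq 2\nu(I_k \vee H)$.
   Context: $I_k$ is an independent set of $k$ vertices; the join $G_1\vee G_2$ is obtained from the disjoint union of $G_1,G_2$ by adding all edges between $V(G_1)$ and $V(G_2)$. $\tau(G)$ is the minimum size of an edge set $X$ with $G-X$ triangle-free; $\nu(G)$ is the maximum number of pairwise edge-disjoint triangles in $G$. *)

From mathcomp Require Import all_boot.
From mathcomp Require Import all_order.
Set Implicit Arguments. Unset Strict Implicit. Unset Printing Implicit Defensive.

Definition simple_graph (T : finType) (g : rel T) : Prop :=
  symmetric g /\ irreflexive g.

Definition edges (T : finType) (g : rel T) : {set {set T}} :=
  [set E : {set T} | [exists x, exists y, g x y && (E == [set x; y])]].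

Definition triangles (T : finType) (g : rel T) : {set {set T}} :=
  [set t : {set T} | [exists x, exists y, exists z,
     [&& g x y, g y z, g x z & t == [set x; y; z]]]].

Definition triangle_free (T : finType) (g : rel T) : Prop :=
  forall x y z : T, ~~ [&& g x y, g y z & g x z].

Definition tri_edges (T : finType) (t : {set T}) : {set {set T}} :=
  [set E : {set T} | (E \subset t) && (#|E| == 2)].

(* X is a set of edges whose deletion makes g triangle-free:
   every triangle of g contains an edge of X. *)
Definition tri_hitting (T : finType) (g : rel T) (X : {set {set T}}) : bool :=
  (X \subset edges g) &&
  [forall t in triangles g, [exists E in X, E \in tri_edges t]].

Definition tri_packing (T : finType) (g : rel T) (F : {set {set T}}) : bool :=
  (F \subset triangles g) &&
  [forall t1 in F, forall t2 in F,
     (t1 != t2) ==> [disjoint tri_edges t1 & tri_edges t2]].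

(* tau(G): minimum size of an edge set whose removal leaves G triangle-free.
   The whole edge set always qualifies (for a simple graph), so the
   arg min below is over a nonempty domain. *)
Definition tau (T : finType) (g : rel T) : nat :=
  #|[arg min_(X < edges g | tri_hitting g X) #|X| ]|.

Definition nu (T : finType) (g : rel T) : nat :=
  \max_(F : {set {set T}} | tri_packing g F) #|F|.

Definition join_Ik (k : nat) {V : finType} (h : rel V) : rel ('I_k + V) :=
  fun u v => match u, v with
             | inl _, inl _ => false
             | inr x, inr y => h x y
             | _, _ => true
             end.
Arguments join_Ik k {V} h.

From mathcomp Require Import all_boot all_order zify.
Set Implicit Arguments. Unset Strict Implicit. Unset Printing Implicit Defensive.

(* The triangles of I_k \/ H are the sets {a, x, y} with a in I_k and xy an edge
   of H.  Take a partial proper k-edge-colouring c of H with as many coloured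
   edges as possible.  The triangles {a, x, y} with xy coloured a are pairwise
   edge-disjoint, so nu >= |c|.  Let X be the set of vertices at which all k
   colours are present: deleting the edges between I_k and X and the edges of
   H - X destroys every triangle, so tau <= k |X| + e(H - X).  Finally
   k |X| + e(H - X) <= 2 |c| by counting c-degrees: a vertex of X has c-degree
   at least k, and a vertex u outside X has at most deg_c(u) uncoloured edges
   to vertices outside X, by a Kempe-chain argument. *)

Section Pairs.
Variable T : finType.
Implicit Types (P : rel T) (x y : T).

Lemma card_pairs_sum P : #|[set p : T * T | P p.1 p.2]| = \sum_x #|[set y | P x y]|.
Proof.
transitivity (\sum_x \sum_y nat_of_bool (P x y)).
  rewrite (pair_bigA _ (fun x y => nat_of_bool (P x y))) -sum1_card big_mkcond /=.
  by apply: eq_bigr => p _; rewrite inE.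
apply: eq_bigr => x _; rewrite -sum1_card [RHS]big_mkcond.
by apply: eq_bigr => y _; rewrite inE; case: (P x y).
Qed.

(* An arbitrary strict total order on T, used to count each unordered pair once. *)
Definition before x y := enum_rank x < enum_rank y.

Lemma before_total x y : x != y -> before x y || before y x.
Proof. by move=> xy; rewrite /before -neq_ltn val_eqE (inj_eq enum_rank_inj). Qed.

Lemma card_sym_pairs P : symmetric P -> irreflexive P ->
  #|[set p : T * T | P p.1 p.2]| = 2 * #|[set p : T * T | P p.1 p.2 && before p.1 p.2]|.
Proof.
move=> P_sym P_irr.
set S1 := [set p : T * T | P p.1 p.2 && before p.1 p.2].
have -> : [set p : T * T | P p.1 p.2] = S1 :|: [set (p.2, p.1) | p in S1].
  apply/setP => -[x y]; rewrite !inE /=; apply/idP/orP => [Pxy | ].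
    have /before_total : x != y by apply: contraTneq Pxy => ->; rewrite P_irr.
    case/orP=> [xy | yx]; [left | right]; first by rewrite Pxy.
    by apply/imsetP; exists (y, x); rewrite // inE /= P_sym Pxy.
  by case=> [/andP[] // | /imsetP[[x' y'] + [-> ->]]]; rewrite inE P_sym => /andP[].
rewrite cardsU card_imset => [|[? ?] [? ?] [-> ->] //].
suff -> : S1 :&: [set (p.2, p.1) | p in S1] = set0 by rewrite cards0 subn0 addnn mul2n.
apply/setP => -[x y]; rewrite !inE /=; apply/andP => -[/andP[_ xy] /imsetP[[x' y']]].
by rewrite inE => /andP[_ yx] [ex ey]; move: xy yx; rewrite /before ex ey /=; lia.
Qed.

Lemma doubleton_eq x y z1 z2 : z1 != z2 ->
  z1 \in [set x; y] -> z2 \in [set x; y] -> [set x; y] = [set z1; z2].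
Proof.
move=> z12 z1xy z2xy; apply/esym/eqP; rewrite eqEcard subUset !sub1set z1xy z2xy.
by rewrite !cards2 z12 ltnS leq_b1.
Qed.

Lemma before_doubleton_inj x y x' y' : before x y -> before x' y' ->
  [set x; y] = [set x'; y'] -> (x, y) = (x', y').
Proof.
move=> + + E; have: x \in [set x'; y'] by rewrite -E !inE eqxx.
have: y \in [set x'; y'] by rewrite -E !inE eqxx orbT.
rewrite !inE => /orP[]/eqP-> /orP[]/eqP-> //; rewrite /before => b1 b2; exfalso; lia.
Qed.

End Pairs.

Section MaxDegreeTwo.
Variables (T : finType) (r : rel T).
Hypothesis r_sym : symmetric r.
Hypothesis r_deg2 : forall v z1 z2 z3, r v z1 -> r v z2 -> r v z3 ->
  [|| z1 == z2, z1 == z3 | z2 == z3].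

Definition leaf v := forall z1 z2, r v z1 -> r v z2 -> z1 = z2.

Section UniqPath.
Variables (a : T) (p : seq T).
Hypotheses (r_p : path r a p) (p_uniq : uniq (a :: p)).
Local Notation s := (a :: p).

Lemma path_nth_next i : i < size p -> r (nth a s i) (nth a s i.+1).
Proof. exact: (pathP a r_p). Qed.

Lemma path_interior_neighbours i : 0 < i < size p ->
  [/\ r (nth a s i) (nth a s i.-1), r (nth a s i) (nth a s i.+1)
    & nth a s i.-1 != nth a s i.+1].
Proof.
case: i => // i /andP[_ ip]; split.
- by rewrite r_sym path_nth_next // ltnW.
- exact: path_nth_next.
- by rewrite nth_uniq //=; lia.
Qed.

Lemma path_interior_not_leaf i : 0 < i < size p -> ~ leaf (nth a s i).
Proof.
by move=> /path_interior_neighbours[r1 r2 ne] lf; rewrite (lf _ _ r1 r2) eqxx in ne.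
Qed.

Lemma leaf_path_closed : 0 < size p -> leaf a -> leaf (last a p) ->
  closed r (mem s).
Proof.
move=> p_gt0 lf_a lf_b; apply: (intro_closed (sym_connect_sym r_sym)).
move=> x z + xs; have ip : index x s <= size p by rewrite -index_mem in xs.
rewrite -(nth_index a xs); move: (index x s) ip => i ip rxz.
have in_s j : j <= size p -> nth a s j \in s by move=> jp; rewrite mem_nth.
have [i0 | i_gt0] := posnP i.
  by move: rxz; rewrite i0 => /(lf_a _ _ (path_nth_next p_gt0)) <-; rewrite in_s.
have [i_lt | i_ge] := ltnP i (size p).
  have i_int : 0 < i < size p by rewrite i_gt0.
  have [r1 r2 ne] := path_interior_neighbours i_int.
  case/or3P: (r_deg2 r1 r2 rxz) => [/eqP e | /eqP <- | /eqP <-].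
  - by rewrite e eqxx in ne.
  - by apply: in_s; lia.
  - by apply: in_s.
have ie : i = (size p).-1.+1 by lia.
move: rxz; rewrite ie prednK // -(last_nth a) => rxz.
have r1 : r (last a p) (nth a s (size p).-1).
  by rewrite r_sym (last_nth a) -[in nth a s (size p)](prednK p_gt0) path_nth_next // prednK.
by rewrite -(lf_b _ _ r1 rxz) in_s // leq_pred.
Qed.

End UniqPath.

Lemma no_three_connected_leaves a b c : leaf a -> leaf b -> leaf c ->
  connect r a b -> connect r a c -> a != b -> a != c -> b != c -> False.
Proof.
move=> lf_a lf_b lf_c /connectP[p0 r_p0 eb] ac ab ac' bc; subst b.
move: lf_b ab bc; case: (shortenP r_p0) => p r_p p_uniq _ lf_b ab bc.
have p_gt0 : 0 < size p by case: p ab {r_p p_uniq lf_b bc} => //=; rewrite eqxx.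
have cl := leaf_path_closed r_p p_uniq p_gt0 lf_a lf_b.
have cs : c \in a :: p by rewrite -(closed_connect cl ac) mem_head.
have := index_mem c (a :: p); rewrite cs /= ltnS => ip.
apply: (path_interior_not_leaf r_p p_uniq (i := index c (a :: p))); last by rewrite nth_index.
rewrite lt0n ltn_neqAle ip andbT; apply/andP; split.
  by apply: contra ac' => /eqP i0; rewrite -(nth_index a cs) i0.
apply: contra bc => /eqP ie; rewrite -(nth_index a cs) ie.
by rewrite (last_nth a).
Qed.
End MaxDegreeTwo.

Section EdgeColouring.
Variables (V : finType) (h : rel V) (k : nat).
Hypotheses (h_sym : symmetric h) (h_irr : irreflexive h).

(* A partial edge colouring of h with colours 'I_k, stored on ordered pairs:
   c (x, y) = Some a means that the edge xy has colour a. *)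
Definition colouring := {ffun V * V -> option 'I_k}.

Implicit Types (c : colouring) (S : {set V}) (a al be : 'I_k) (u v x y z : V).

Definition proper_colouring c :=
  [forall x, forall y, (c (x, y) == c (y, x)) && ((c (x, y) != None) ==> h x y)] &&
  [forall x, forall y, forall z,
     ((c (x, y) != None) && (c (x, y) == c (x, z))) ==> (y == z)].

Definition ncoloured c := #|[set p | c p != None]|.
Definition col_deg c v := #|[set z | c (v, z) != None]|.
Definition sees c v a := [exists z, c (v, z) == Some a].
Definition saturated c v := [forall a, sees c v a].
Definition col_nbr c v a := odflt v [pick z | c (v, z) == Some a].

Lemma proper_colouringP c : reflect
  [/\ forall x y, c (x, y) = c (y, x), forall x y, c (x, y) != None -> h x y &
      forall x y z a, c (x, y) = Some a -> c (x, z) = Some a -> y = z]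
  (proper_colouring c).
Proof.
apply: (iffP andP) => [[/forallP A /forallP B]|[A B C]].
  split.
  - by move=> x y; have /forallP/(_ y)/andP[/eqP] := A x.
  - by move=> x y; have /forallP/(_ y)/andP[_ /implyP] := A x.
  - move=> x y z a e1 e2; have /forallP/(_ y)/forallP/(_ z)/implyP := B x.
    by rewrite e1 e2 eqxx => /(_ isT)/eqP.
split; apply/forallP => x; apply/forallP => y.
  by rewrite A eqxx /=; apply/implyP; rewrite -A; apply: B.
apply/forallP => z; apply/implyP => /andP[]; case E: (c (x, y)) => [a|] // _ /eqP E2.
by apply/eqP; apply: (C x y z a).
Qed.

Lemma seesP c v a : reflect (exists z, c (v, z) = Some a) (sees c v a).
Proof. by apply: (iffP existsP) => [[z /eqP]|[z E]]; exists z => //; apply/eqP. Qed.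

Lemma col_nbrP c v a : sees c v a -> c (v, col_nbr c v a) = Some a.
Proof.
move=> /seesP[z cz]; rewrite /col_nbr; case: pickP => [z' /eqP // | /(_ z)].
by rewrite cz eqxx.
Qed.

Lemma saturated_col_deg c v : saturated c v -> k <= col_deg c v.
Proof.
move=> /forallP sat_v.
have inj : injective (col_nbr c v).
  by move=> a b e; have := col_nbrP (sat_v a); rewrite e col_nbrP // => -[].
rewrite -{1}(card_ord k) -(card_imset _ inj); apply: subset_leq_card.
by apply/subsetP => z /imsetP[a _ ->]; rewrite inE col_nbrP.
Qed.

Definition recolour c u y a : colouring :=
  [ffun p => if (p == (u, y)) || (p == (y, u)) then Some a else c p].

Lemma recolour_proper c u y a : proper_colouring c -> h u y -> c (u, y) = None ->
  ~~ sees c u a -> ~~ sees c y a -> proper_colouring (recolour c u y a).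
Proof.
move=> /proper_colouringP[c_sym c_edge c_proper] huy cuy /seesP nu /seesP ny.
have uy : u != y by apply: contraTneq huy => ->; rewrite h_irr.
apply/proper_colouringP; split.
- move=> x z; rewrite !ffunE !xpair_eqE.
  by case: (x == u) (z == y) (x == y) (z == u) => [] [] [] [] //=; rewrite c_sym.
- move=> x z; rewrite !ffunE !xpair_eqE.
  case: ifP => [/orP[]/andP[/eqP-> /eqP->]|_] H //; first by rewrite h_sym.
  exact: c_edge.
- move=> x z1 z2 b; rewrite !ffunE !xpair_eqE.
  case: (x =P u) => [xu|xu]; case: (x =P y) => [xy|xy] /=.
  + by move: uy; rewrite -xu -xy eqxx.
  + subst x; case: (z1 =P y) => [->|_]; case: (z2 =P y) => [->|_] //=.
    * by move=> [<-] E; case: nu; exists z2.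
    * by move=> E [E2]; case: nu; exists z1; rewrite E -E2.
    * exact: c_proper.
  + subst x; case: (z1 =P u) => [->|_]; case: (z2 =P u) => [->|_] //=.
    * by move=> [<-] E; case: ny; exists z2.
    * by move=> E [E2]; case: ny; exists z1; rewrite E -E2.
    * exact: c_proper.
  + exact: c_proper.
Qed.

Lemma ncoloured_recolour c u y a : c (u, y) = None ->
  ncoloured c < ncoloured (recolour c u y a).
Proof.
move=> cuy; apply: proper_card; apply/properP; split.
  by apply/subsetP => p; rewrite !inE ffunE; case: ifP.
by exists (u, y); rewrite !inE ?cuy // ffunE eqxx.
Qed.

Definition swap_col al be (o : option 'I_k) :=
  if o == Some al then Some be else if o == Some be then Some al else o.

Lemma swap_colK al be : involutive (swap_col al be).
Proof.
move=> o; rewrite /swap_col.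
have [-> | oa] := eqVneq o (Some al).
  by rewrite eqxx; case: eqP => [-> | _]; rewrite ?eqxx.
have [-> | ob] := eqVneq o (Some be); first by rewrite eqxx.
by rewrite (negbTE oa) (negbTE ob).
Qed.

Lemma swap_col_eqNone al be o : (swap_col al be o == None) = (o == None).
Proof. by rewrite /swap_col; case: ifP => [/eqP->//|_]; case: ifP => [/eqP->//|//]. Qed.

(* The (al, be)-subgraph of c, whose components are Kempe chains. *)
Definition kempe_rel c al be : rel V :=
  fun x z => (c (x, z) == Some al) || (c (x, z) == Some be).

Definition kempe_swap c S al be : colouring :=
  [ffun p => if p.1 \in S then swap_col al be (c p) else c p].

Lemma kempe_swap_proper c S al be : proper_colouring c ->
  closed (kempe_rel c al be) S -> proper_colouring (kempe_swap c S al be).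
Proof.
move=> /proper_colouringP[c_sym c_edge c_proper] clS; apply/proper_colouringP; split.
- move=> x z; rewrite !ffunE /=.
  case R: (kempe_rel c al be x z); first by rewrite (clS _ _ R) c_sym.
  move: R; rewrite /kempe_rel /swap_col c_sym => /norP[/negbTE -> /negbTE ->].
  by case: (x \in S); case: (z \in S).
- by move=> x z; rewrite ffunE /=; case: (x \in S); rewrite ?swap_col_eqNone; exact: c_edge.
- move=> x z1 z2 a; rewrite !ffunE /=; case: (x \in S); last exact: c_proper.
  move=> /(congr1 (swap_col al be)) + /(congr1 (swap_col al be)); rewrite !swap_colK.
  case Esw: (swap_col al be (Some a)) => [b|]; first exact: c_proper.
  by move: (swap_col_eqNone al be (Some a)); rewrite Esw.
Qed.

Lemma ncoloured_kempe_swap c S al be : ncoloured (kempe_swap c S al be) = ncoloured c.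
Proof.
apply: eq_card => p; rewrite !inE ffunE.
by case: (p.1 \in S); rewrite // swap_col_eqNone.
Qed.

Lemma sees_kempe_swap_out c S al be v a : v \notin S ->
  sees (kempe_swap c S al be) v a = sees c v a.
Proof. by move=> vS; apply: eq_existsb => z; rewrite ffunE /= (negbTE vS). Qed.

Lemma sees_kempe_swap_in c S al be v : v \in S ->
  sees (kempe_swap c S al be) v be = sees c v al.
Proof.
move=> vS; apply: eq_existsb => z; rewrite ffunE /= vS.
have -> : Some be = swap_col al be (Some al) by rewrite /swap_col eqxx.
by rewrite (inj_eq (can_inj (swap_colK al be))).
Qed.

Lemma kempe_rel_sym c al be : proper_colouring c -> symmetric (kempe_rel c al be).
Proof. by move=> /proper_colouringP[S _ _] x z; rewrite /kempe_rel S. Qed.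

Lemma kempe_rel_deg2 c al be v z1 z2 z3 : proper_colouring c ->
  kempe_rel c al be v z1 -> kempe_rel c al be v z2 -> kempe_rel c al be v z3 ->
  [|| z1 == z2, z1 == z3 | z2 == z3].
Proof.
move=> /proper_colouringP[_ _ c_proper]; rewrite /kempe_rel.
have E zi zj b : c (v, zi) = Some b -> c (v, zj) = Some b -> zi == zj.
  by move=> e1 e2; apply/eqP; apply: c_proper e1 e2.
by move=> /orP[] /eqP e1 /orP[] /eqP e2 /orP[] /eqP e3;
   rewrite ?(E _ _ _ e1 e2) ?(E _ _ _ e1 e3) ?(E _ _ _ e2 e3) ?orbT.
Qed.

Lemma kempe_rel_leaf c al be v : proper_colouring c ->
  ~~ sees c v al || ~~ sees c v be -> leaf (kempe_rel c al be) v.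
Proof.
move=> /proper_colouringP[_ _ c_proper] miss z1 z2.
rewrite /kempe_rel => /orP[] /eqP e1 /orP[] /eqP e2; try exact: c_proper e1 e2;
by case/orP: miss => /negP[]; apply/seesP; eexists; eassumption.
Qed.

Lemma colour_class_doubleton c a x y x' y' z : proper_colouring c ->
  c (x, y) = Some a -> c (x', y') = Some a -> z \in [set x; y] -> z \in [set x'; y'] ->
  [set x; y] = [set x'; y'].
Proof.
move=> /proper_colouringP[c_sym _ c_proper] cxy cxy' zxy zxy'.
have nbr u v : c (u, v) = Some a -> z \in [set u; v] ->
    exists2 w, c (z, w) = Some a & [set u; v] = [set z; w].
  move=> cuv; rewrite !inE => /orP[]/eqP->; first by exists v.
  by exists u; [rewrite c_sym | rewrite setUC].
have [w cw ->] := nbr _ _ cxy zxy; have [w' cw' ->] := nbr _ _ cxy' zxy'.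
by rewrite (c_proper _ _ _ _ cw cw').
Qed.

Definition max_colouring c :=
  proper_colouring c /\ forall c', proper_colouring c' -> ncoloured c' <= ncoloured c.

Lemma max_uncoloured_sees c u y a : max_colouring c -> h u y -> c (u, y) = None ->
  ~~ sees c y a -> sees c u a.
Proof.
move=> [pc mx] huy cuy ny; apply: contraT => nu.
by have := mx _ (recolour_proper pc huy cuy nu ny); rewrite leqNgt ncoloured_recolour.
Qed.

Lemma max_kempe_swap c S al be : max_colouring c ->
  closed (kempe_rel c al be) S -> max_colouring (kempe_swap c S al be).
Proof.
move=> [pc mx] clS; split; first exact: kempe_swap_proper.
by move=> c' /mx; rewrite ncoloured_kempe_swap.
Qed.

Lemma kempe_connect c u y al be : max_colouring c -> h u y -> c (u, y) = None ->
  ~~ sees c u be -> ~~ sees c y al -> connect (kempe_rel c al be) y u.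
Proof.
move=> mc huy cuy nu ny; apply: contraT => yu.
set S := [set x | connect (kempe_rel c al be) y x].
have clS : closed (kempe_rel c al be) S.
  move=> x z /(connect_closed (sym_connect_sym (kempe_rel_sym al be mc.1)) y).
  by rewrite !inE.
have uS : u \notin S by rewrite inE.
have yS : y \in S by rewrite inE connect0.
have c'uy : kempe_swap c S al be (u, y) = None by rewrite ffunE /= (negbTE uS).
have ny' : ~~ sees (kempe_swap c S al be) y be by rewrite sees_kempe_swap_in.
have := max_uncoloured_sees (max_kempe_swap mc clS) huy c'uy ny'.
by rewrite sees_kempe_swap_out // (negbTE nu).
Qed.

(* Send each such y to the neighbour of u along a colour al missing at y (al is
   present at u by maximality).  Two y with the same image would be, together
   with u, three ends of a single (al, be)-Kempe chain, be missing at u. *)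
Lemma uncoloured_nbrs_le_col_deg c u : max_colouring c -> ~~ saturated c u ->
  #|[set y | h u y && (c (u, y) == None) && ~~ saturated c y]| <= col_deg c u.
Proof.
move=> mc /forallPn[be u_be]; set A := [set y | _].
have pc := mc.1.
pose miss y := odflt be [pick a | ~~ sees c y a].
have missP y : ~~ saturated c y -> ~~ sees c y (miss y).
  by move=> /forallPn[a ya]; rewrite /miss; case: pickP => // /(_ a); rewrite ya.
have memA y : y \in A -> [/\ h u y, c (u, y) = None & ~~ sees c y (miss y)].
  by rewrite !inE => /andP[/andP[-> /eqP ->] /missP].
have u_miss y : y \in A -> sees c u (miss y).
  by move=> /memA[huy cuy ny]; apply: max_uncoloured_sees mc huy cuy ny.
pose f y := col_nbr c u (miss y).
suff f_inj : {in A &, injective f}.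
  rewrite -(card_in_imset f_inj); apply: subset_leq_card; apply/subsetP => z.
  by case/imsetP => y /u_miss yA ->; rewrite inE col_nbrP.
move=> y1 y2 y1A y2A f12; apply/eqP/negP => /negP y12.
have miss12 : miss y1 = miss y2.
  by have := col_nbrP (u_miss _ y1A); rewrite /f in f12; rewrite f12 col_nbrP ?u_miss // => -[].
have [h1 c1 n1] := memA _ y1A; have [h2 c2 n2] := memA _ y2A; rewrite -miss12 in n2.
have k1 := kempe_connect mc h1 c1 u_be n1; have k2 := kempe_connect mc h2 c2 u_be n2.
have kr_sym := kempe_rel_sym (miss y1) be pc.
have kr_deg2 v z1 z2 z3 := @kempe_rel_deg2 c (miss y1) be v z1 z2 z3 pc.
have ne y : h u y -> u != y by apply: contraTneq => ->; rewrite h_irr.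
apply: (no_three_connected_leaves kr_sym kr_deg2 (a := u) (b := y1) (c := y2)).
- by apply: kempe_rel_leaf; rewrite // u_be orbT.
- by apply: kempe_rel_leaf; rewrite // n1.
- by apply: kempe_rel_leaf; rewrite // n2.
- by rewrite (sym_connect_sym kr_sym).
- by rewrite (sym_connect_sym kr_sym).
- exact: ne.
- exact: ne.
- exact: y12.
Qed.

Definition saturated_set c := [set v | saturated c v].

Lemma max_colouring_count c : max_colouring c ->
  2 * (k * #|saturated_set c|) + #|[set p : V * V | h p.1 p.2 &&
     (p.1 \notin saturated_set c) && (p.2 \notin saturated_set c)]|
  <= 2 * ncoloured c.
Proof.
move=> mc; set X := saturated_set c; have ncol_sum : ncoloured c = \sum_v col_deg c v.
  by rewrite -card_pairs_sum; apply: eq_card => -[x y]; rewrite !inE.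
rewrite ncol_sum (card_pairs_sum (fun x y => h x y && (x \notin X) && (y \notin X))).
rewrite [X in _ <= 2 * X](bigID [in X]) /= mulnDr.
rewrite [X in _ + X <= _](bigID [in X]) /= big1 ?add0n => [|v vX]; last first.
  by rewrite vX; apply/eqP; rewrite cards_eq0; apply/eqP/setP => y; rewrite !inE andbF.
rewrite leq_add //.
  rewrite leq_mul2l mulnC -sum_nat_const; apply/orP; right.
  by apply: leq_sum => v; rewrite inE => /saturated_col_deg.
rewrite big_distrr /=; apply: leq_sum => v vX; rewrite mul2n -addnn.
set U := [set z | c (v, z) != None] :|: [set y | h v y && (c (v, y) == None) && ~~ saturated c y].
have sub : [set y | h v y && (v \notin X) && (y \notin X)] \subset U.
  by apply/subsetP => y; rewrite !inE => /andP[/andP[-> _] ->]; case: eqP.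
apply: leq_trans (subset_leq_card sub) (leq_trans (leq_card_setU _ _) _).
by rewrite leq_add2l uncoloured_nbrs_le_col_deg //; rewrite inE in vX.
Qed.

Lemma max_colouring_bound c : max_colouring c ->
  k * #|saturated_set c| + #|[set p : V * V | h p.1 p.2 &&
     (p.1 \notin saturated_set c) && (p.2 \notin saturated_set c) && before p.1 p.2]|
  <= 2 * #|[set p : V * V | (c p != None) && before p.1 p.2]|.
Proof.
move=> mc; have := max_colouring_count mc; set X := saturated_set c.
have [c_sym c_edge _] := proper_colouringP _ mc.1.
pose P x y := h x y && (x \notin X) && (y \notin X).
have P_sym : symmetric P by move=> x y; rewrite /P h_sym -!andbA [_ && (y \notin X)]andbC.
have P_irr : irreflexive P by move=> x; rewrite /P h_irr.
pose Q x y := c (x, y) != None.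
have Q_sym : symmetric Q by move=> x y; rewrite /Q c_sym.
have Q_irr : irreflexive Q by move=> x; apply: contraFF (c_edge x x) (h_irr x).
have -> : ncoloured c = #|[set p : V * V | Q p.1 p.2]|.
  by apply: eq_card => -[x y]; rewrite !inE.
rewrite (card_sym_pairs P_sym P_irr) (card_sym_pairs Q_sym Q_irr).
rewrite -mulnDr leq_pmul2l // => /leq_trans; apply; rewrite leq_pmul2l //.
by apply: subset_leq_card; apply/subsetP => -[x y]; rewrite !inE.
Qed.

End EdgeColouring.

Lemma exists_max_colouring (V : finType) (h : rel V) (k : nat) :
  exists c : colouring V k, max_colouring h c.
Proof.
pose c0 : colouring V k := [ffun _ => None].
have pc0 : proper_colouring h c0.
  by apply/proper_colouringP; split=> [x y | x y | x y z a]; rewrite !ffunE.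
have [c pc c_max] := arg_maxnP (@ncoloured V k) pc0.
by exists c; split.
Qed.

Section SumEq.
Variables (A B : eqType) (a a' : A) (b b' : B).
Lemma inl_eqE : (inl a == inl a' :> A + B) = (a == a'). Proof. by []. Qed.
Lemma inr_eqE : (inr b == inr b' :> A + B) = (b == b'). Proof. by []. Qed.
Lemma inl_eq_inr : (inl a == inr b :> A + B) = false. Proof. by []. Qed.
Lemma inr_eq_inl : (inr b == inl a :> A + B) = false. Proof. by []. Qed.
End SumEq.

Section Triangles.
Variables (T : finType) (g : rel T).
Hypothesis g_irr : irreflexive g.

Lemma edges_pair x y : g x y -> [set x; y] \in edges g.
Proof.
by move=> gxy; rewrite inE; apply/existsP; exists x; apply/existsP; exists y; rewrite gxy eqxx.
Qed.

Lemma tri_edges_pair (t : {set T}) x y : x != y -> x \in t -> y \in t -> [set x; y] \in tri_edges t.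
Proof. by move=> xy xt yt; rewrite inE cards2 xy andbT subUset !sub1set xt yt. Qed.

Lemma edges_tri_hitting : tri_hitting g (edges g).
Proof.
apply/andP; split => //; apply/forallP => t; apply/implyP.
rewrite inE => /existsP[x /existsP[y /existsP[z /and4P[gxy _ _ /eqP ->]]]].
apply/existsP; exists [set x; y]; rewrite edges_pair //= tri_edges_pair ?inE ?eqxx ?orbT //.
by apply: contraTneq gxy => ->; rewrite g_irr.
Qed.

Lemma tau_le_tri_hitting X : tri_hitting g X -> tau g <= #|X|.
Proof. by move=> hX; rewrite /tau; case: arg_minnP => [|Y _ ->//]; exact: edges_tri_hitting. Qed.

End Triangles.

Lemma tri_packing_le_nu (T : finType) (g : rel T) F : tri_packing g F -> #|F| <= nu g.
Proof. by move=> pF; apply: leq_bigmax_cond. Qed.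

Section Join.
Variables (V : finType) (h : rel V) (k : nat).
Hypotheses (h_sym : symmetric h) (h_irr : irreflexive h) (h_tf : triangle_free h).

Local Notation g := (join_Ik k h).
Local Notation T := ('I_k + V)%type.

Lemma join_Ik_irr : irreflexive g.
Proof. by case=> //= x; exact: h_irr. Qed.

Lemma join_triangleP t : t \in triangles g ->
  exists a x y, h x y /\ t = [set inl a; inr x; inr y].
Proof.
rewrite inE => /existsP[p /existsP[q /existsP[r /and4P[pq qr pr /eqP ->]]]].
case: p q r pq qr pr => [a|x] [b|y] [c|z] //=.
- by move=> _ hyz _; exists a, y, z.
- by move=> _ _ hxz; exists b, x, z; rewrite [[set inr x] :|: _]setUC.
- by move=> hxy _ _; exists c, x, y; rewrite setUC setUA.
- by move=> hxy hyz hxz; case/negP: (h_tf x y z); rewrite hxy hyz hxz.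
Qed.

Definition join_cover (X : {set V}) : {set {set T}} :=
  [set [set inl p.1; inr p.2] | p in setX [set: 'I_k] X] :|:
  [set [set inr p.1; inr p.2] | p in [set p : V * V |
     h p.1 p.2 && (p.1 \notin X) && (p.2 \notin X) && before p.1 p.2]].

Lemma join_cover_hitting X : tri_hitting g (join_cover X).
Proof.
apply/andP; split.
  apply/subsetP => E; rewrite inE => /orP[] /imsetP[p pX ->]; apply: edges_pair => //.
  by move: pX; rewrite !inE => /andP[/andP[/andP[]]].
apply/forallP => t; apply/implyP => /join_triangleP[a [x [y [hxy ->{t}]]]].
set t := [set inl a; inr x; inr y].
have hit E : E \in join_cover X -> E \in tri_edges t ->
    [exists E in join_cover X, E \in tri_edges t].
  by move=> E1 E2; apply/existsP; exists E; rewrite E1 E2.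
have xy : x != y by apply: contraTneq hxy => ->; rewrite h_irr.
have [ta tx ty] : [/\ inl a \in t, inr x \in t & inr y \in t] by rewrite !inE !eqxx ?orbT.
have [xX | xX] := boolP (x \in X).
  apply: (hit [set inl a; inr x]); last exact: tri_edges_pair.
  by rewrite inE; apply/orP; left; apply/imsetP; exists (a, x); rewrite // !inE xX.
have [yX | yX] := boolP (y \in X).
  apply: (hit [set inl a; inr y]); last exact: tri_edges_pair.
  by rewrite inE; apply/orP; left; apply/imsetP; exists (a, y); rewrite // !inE yX.
have ne (u v : V) : u != v -> inr u != inr v :> T by apply: contra => /eqP[->].
case/orP: (before_total xy) => [bxy | byx].
  apply: (hit [set inr x; inr y]); last exact: tri_edges_pair (ne _ _ xy) tx ty.
  rewrite inE; apply/orP; right; apply/imsetP; exists (x, y) => //.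
  by rewrite inE /= hxy xX yX.
apply: (hit [set inr y; inr x]); last by apply: tri_edges_pair; rewrite // ne // eq_sym.
rewrite inE; apply/orP; right; apply/imsetP; exists (y, x) => //.
by rewrite inE /= h_sym hxy xX yX.
Qed.

Lemma card_join_cover X : #|join_cover X| <=
  k * #|X| + #|[set p : V * V | h p.1 p.2 && (p.1 \notin X) && (p.2 \notin X) && before p.1 p.2]|.
Proof.
apply: leq_trans (leq_card_setU _ _) (leq_add _ (leq_imset_card _ _)).
by apply: leq_trans (leq_imset_card _ _) _; rewrite cardsX cardsT card_ord.
Qed.

Definition coloured_triples (c : colouring V k) : {set 'I_k * (V * V)} :=
  [set p | (c p.2 == Some p.1) && before p.2.1 p.2.2].
Definition colour_triangle (p : 'I_k * (V * V)) : {set T} :=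
  [set inl p.1; inr p.2.1; inr p.2.2].
Definition colour_packing (c : colouring V k) := colour_triangle @: coloured_triples c.

Lemma mem_colour_triangle_inl p b : (inl b \in colour_triangle p) = (b == p.1).
Proof. by rewrite !inE inl_eqE !inl_eq_inr !orbF. Qed.

Lemma mem_colour_triangle_inr p z : (inr z \in colour_triangle p) = (z \in [set p.2.1; p.2.2]).
Proof. by rewrite !inE !inr_eqE inr_eq_inl. Qed.

Lemma colour_triangle_meet (c : colouring V k) p q e1 e2 : proper_colouring h c ->
  p \in coloured_triples c -> q \in coloured_triples c -> e1 != e2 ->
  e1 \in colour_triangle p -> e2 \in colour_triangle p ->
  e1 \in colour_triangle q -> e2 \in colour_triangle q -> p = q.
Proof.
move: p q => [a [x y]] [b [x' y']] pc pin qin.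
have /andP[/eqP cxy bxy] : (c (x, y) == Some a) && before x y by rewrite inE in pin.
have /andP[/eqP cxy' bxy'] : (c (x', y') == Some b) && before x' y' by rewrite inE in qin.
have pair_eq : [set x; y] = [set x'; y'] -> a = b -> (a, (x, y)) = (b, (x', y')).
  by move=> /(before_doubleton_inj bxy bxy') [-> ->] ->.
case: e1 => [d1|z1]; case: e2 => [d2|z2];
  rewrite ?mem_colour_triangle_inl ?mem_colour_triangle_inr /= => ne.
- by move=> /eqP da /eqP db; rewrite da db eqxx in ne.
- move=> /eqP da zxy /eqP db zxy'; subst d1 b.
  by apply: pair_eq => //; apply: colour_class_doubleton pc cxy cxy' zxy zxy'.
- move=> zxy /eqP da zxy' /eqP db; subst d2 b.
  by apply: pair_eq => //; apply: colour_class_doubleton pc cxy cxy' zxy zxy'.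
- have {}ne : z1 != z2 by apply: contra ne => /eqP->.
  move=> z1xy z2xy z1xy' z2xy'.
  have E : [set x; y] = [set x'; y'].
    by rewrite (doubleton_eq ne z1xy z2xy) (doubleton_eq ne z1xy' z2xy').
  have [ex ey] := before_doubleton_inj bxy bxy' E.
  by apply: pair_eq E _; move: cxy; rewrite ex ey cxy' => -[].
Qed.

Lemma colour_packing_tri_packing (c : colouring V k) : proper_colouring h c ->
  tri_packing g (colour_packing c).
Proof.
move=> pc; have /proper_colouringP[_ c_edge _] := pc; apply/andP; split.
  apply/subsetP => t /imsetP[[a [x y]] + ->]; rewrite inE /= => /andP[/eqP cxy _].
  rewrite inE; apply/existsP; exists (inl a); apply/existsP; exists (inr x).
  by apply/existsP; exists (inr y); rewrite /= (c_edge x y) ?cxy // eqxx.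
apply/forallP => t1; apply/implyP => /imsetP[p pc_p ->].
apply/forallP => t2; apply/implyP => /imsetP[q pc_q ->].
apply/implyP => pq; apply/pred0P => E /=; apply/negP => /andP[].
rewrite !inE => /andP[Ep /cards2P[e1 [e2 [e12 EE]]]] /andP[Eq _].
move: Ep Eq; rewrite EE !subUset !sub1set => /andP[e1p e2p] /andP[e1q e2q].
by move: pq; rewrite (colour_triangle_meet pc pc_p pc_q e12 e1p e2p e1q e2q) eqxx.
Qed.

Lemma card_colour_packing (c : colouring V k) : proper_colouring h c ->
  #|colour_packing c| = #|[set p : V * V | (c p != None) && before p.1 p.2]|.
Proof.
move=> pc; have -> : [set p : V * V | (c p != None) && before p.1 p.2] =
    [set p.2 | p in coloured_triples c].
  apply/setP => -[x y]; rewrite inE /=; apply/idP/imsetP.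
    by case E: (c (x, y)) => [a|] //= bxy; exists (a, (x, y)); rewrite // inE /= E eqxx.
  by move=> [[a [x' y']]]; rewrite inE /= => /andP[/eqP cxy bxy] [-> ->]; rewrite cxy.
rewrite card_in_imset ?card_in_imset //.
  move=> [a p] [b q]; rewrite !inE /= => /andP[/eqP cp _] /andP[/eqP cq _] epq.
  by move: cp; rewrite epq cq => -[->].
move=> [a [x y]] q pc_p pc_q Epq; move: (pc_p); rewrite inE /= => /andP[_ bxy].
have xy : inr x != inr y :> T.
  by apply: contraTneq bxy => -[->]; rewrite /before ltnn.
by apply: colour_triangle_meet pc pc_p pc_q xy _ _ _ _; rewrite -?Epq !inE eqxx ?orbT.
Qed.

Lemma nu_join_ge (c : colouring V k) : proper_colouring h c ->
  #|[set p : V * V | (c p != None) && before p.1 p.2]| <= nu g.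
Proof.
by move=> pc; rewrite -card_colour_packing //; apply/tri_packing_le_nu/colour_packing_tri_packing.
Qed.

End Join.

Unset Implicit Arguments.

Theorem mainTheorem9 (V : finType) (h : rel V) (k : nat) :
  simple_graph h -> triangle_free h -> 1 <= k ->
  tau (join_Ik k h) <= 2 * nu (join_Ik k h).
Proof.
move=> [h_sym h_irr] h_tf _.
have [c c_max] := exists_max_colouring h k.
have hit := join_cover_hitting k h_sym h_irr h_tf (saturated_set c).
apply: leq_trans (tau_le_tri_hitting (@join_Ik_irr _ _ k h_irr) hit) _.
apply: leq_trans (card_join_cover h k (saturated_set c)) _.
apply: leq_trans (max_colouring_bound h_sym h_irr c_max) _.
by rewrite leq_mul2l nu_join_ge ?orbT // c_max.1.
Qed.
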